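(* Let $\mathsf{H}^\ast$ be a clique coverage of $\mathrm{G}$ with $|\mathsf{H}^\ast|=d$, and let $(\mathrm{Q}_1,\dots,\mathrm{Q}_d)$ be an ordering of $\mathsf{H}^\ast$ in which every clique of $\mathsf{H}^\ast$ appears exactly once. For each clique $\mathrm{C}\in\mathsf{H}^\ast$ let $\mathbf{M}_{\mathrm{C}}\in\mathbb{R}^{nb\times nb}$ be a clique-gossip matrix with arbitrary blocks $\mathbf{A}_{ij}(\mathrm{C})$. Put $\mathbf{F}=\mathbf{M}_{\mathrm{Q}_d}\cdots\mathbf{M}_{\mathrm{Q}_{s+1}}\mathbf{M}_{\mathrm{Q}_s}\cdots\mathbf{M}_{\mathrm{Q}_1}$ and, for $s\in\{1,\dots,d-1\}$, let $\mathbf{F}_{\pi_s}$ be the same product with the two factors $\mathbf{M}_{\mathrm{Q}_s}$ and $\mathbf{M}_{\mathrm{Q}_{s+1}}$ interchanged, i.e. $\mathbf{F}_{\pi_s}=\mathbf{M}_{\mathrm{Q}_d}\cdots\mathbf{M}_{\mathrm{Q}_{s+2}}\mathbf{M}_{\mathrm{Q}_s}\mathbf{M}_{\mathrm{Q}_{s+1}}\mathbf{M}_{\mathrm{Q}_{s-1}}\cdots\mathbf{M}_{\mathrm{Q}_1}$. If either (i) $\mathrm{Q}_s$ and $\mathrm{Q}_{s+1}$ are not adjacent, or (ii) $\mathrm{Q}_s$ and $\mathrm{Q}_{s+1}$ are adjacent but neither of them lies on any cycle of the generalized line graph $\mathcal{L}(\mathsf{H}^\ast)$, then $\mathbf{F}$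 and $\mathbf{F}_{\pi_s}$ have the same characteristic polynomial.
   Context: $\mathrm{G}=(\mathrm{V},\mathrm{E})$ is a simple undirected graph with $\mathrm{V}=\{1,\dots,n\}$; $\mathrm{G}[\mathrm{S}]$ is the induced subgraph on $\mathrm{S}\subset\mathrm{V}$. A clique is a subset $\mathrm{C}\subset\mathrm{V}$ with $\mathrm{G}[\mathrm{C}]$ complete. A clique coverage of $\mathrm{G}$ is a finite set $\mathsf{H}^\ast$ of cliques whose union is $\mathrm{V}$ and whose union graph $\bigcup_{\mathrm{C}\in\mathsf{H}^\ast}\mathrm{G}[\mathrm{C}]$ is connected. Two distinct cliques are adjacent if they intersect. The generalized line graph $\mathcal{L}(\mathsf{H}^\ast)$ has vertex set $\mathsf{H}^\ast$, with distinct $\mathrm{C},\mathrm{C}'$ joined iff $\mathrm{C}\cap\mathrm{C}'\neq\emptyset$; a cycle means a cycle in this graph in the usual graph-theoretic sense. Fix $b\ge1$. A clique-gossip matrix for a clique $\mathrm{C}$ is a block matrix $\mathbf{M}_{\mathrm{C}}\in\mathbb{R}^{nb\times nb}$ with $b\times b$ blocks, whose $(i,j)$ block equals an arbitrary matrix $\mathbf{A}_{ij}(\mathrm{C})\in\mathbb{R}^{b\times b}$ when $i,j\in\mathrm{C}$, equals $\mathbf{I}_b$ when $i=j\notin\mathrm{C}$, and equals $\mathbf{0}_b$ otherwise. (It represents the update $\mathbf{x}_i\mapsto\sum_{j\in\mathrm{C}}\mathbf{A}_{ij}(\mathrm{C})\mathbf{x}_j$ for $i\in\mathrm{C}$, $\mathbf{x}_i\mapsto\mathbf{x}_i$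 for $i\notin\mathrm{C}$.) *)

From HB Require Import structures.
From mathcomp Require Import all_boot all_order all_algebra all_fingroup.
Set Implicit Arguments. Unset Strict Implicit. Unset Printing Implicit Defensive.
Import Order.TTheory GRing.Theory Num.Theory.
Local Open Scope ring_scope.

(* Simple undirected graph on V = 'I_n (vertices 0..n-1 stand for 1..n). *)
Definition simple_graph (n : nat) (e : rel 'I_n) : Prop :=
  irreflexive e /\ symmetric e.

Definition is_clique (n : nat) (e : rel 'I_n) (C : {set 'I_n}) : Prop :=
  forall i j, i \in C -> j \in C -> i != j -> e i j.

Definition union_graph_rel (n : nat) (H : {set {set 'I_n}}) : rel 'I_n :=
  fun i j => (i != j) && [exists C in H, (i \in C) && (j \in C)].

Definition clique_coverage (n : nat) (e : rel 'I_n) (H : {set {set 'I_n}}) : Prop :=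
  [/\ forall C, C \in H -> is_clique e C,
      \bigcup_(C in H) C = [set: 'I_n] &
      forall i j : 'I_n, connect (union_graph_rel H) i j].

(* Adjacency of cliques (distinct and intersecting): edges of L(H). *)
Definition clique_adj (n : nat) : rel {set 'I_n} :=
  fun C C' => (C != C') && (C :&: C' != set0).

Definition on_cycle (n : nat) (H : {set {set 'I_n}}) (C : {set 'I_n}) : Prop :=
  exists p : seq {set 'I_n},
    [/\ (3 <= size p)%N, uniq p, {subset p <= H}, path.cycle (@clique_adj n) p & C \in p].

Definition gossip_mx (R : pzRingType) (n b : nat) (C : {set 'I_n})
    (A : 'I_n -> 'I_n -> 'M[R]_b) : 'M[R]_(\sum_(i < n) b) :=
  mxblock (p_ := fun _ : 'I_n => b) (q_ := fun _ : 'I_n => b)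
    (fun i j => if (i \in C) && (j \in C) then A i j
                else if i == j then 1%:M else 0).

Definition mxprod (R : pzRingType) (m : nat) (s : seq 'M[R]_m) : 'M[R]_m :=
  foldr (@mulmx R m m m) 1%:M s.

(* M_{Q_d} ... M_{Q_1}  (0-indexed: M_(Q (d-1)) *m ... *m M_(Q 0)). *)
Definition ordered_prod (R : pzRingType) (n b d : nat) (Q : 'I_d -> {set 'I_n})
    (A : {set 'I_n} -> 'I_n -> 'I_n -> 'M[R]_b) : 'M[R]_(\sum_(i < n) b) :=
  mxprod [seq gossip_mx (Q k) (A (Q k)) | k <- rev (enum 'I_d)].

From HB Require Import structures.
From mathcomp Require Import all_boot all_order all_algebra all_fingroup.
Set Implicit Arguments.
Unset Strict Implicit.
Unset Printing Implicit Defensive.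
Import Order.TTheory GRing.Theory Num.Theory.
Local Open Scope ring_scope.

(* If the cliques Q_s and Q_(s+1) are disjoint, their gossip matrices commute
   and the two products coincide.  Otherwise deleting the edge Q_s -- Q_(s+1)
   of L(H) cuts off a side S containing Q_s but not Q_(s+1), since an
   alternative path would close a cycle through Q_s.  Cliques on different
   sides are disjoint, so their gossip matrices commute, the single exception
   being the pair M_(Q_s), M_(Q_(s+1)).  Collecting the factors outside S
   into X and those inside into Y (keeping their relative order) then gives
   F = X Y and F_pi = Y X, and X Y and Y X share their characteristic
   polynomial. *)

(* Determinants of the two Schur-complement factorisations of
   [[t, X], [Y, 1]] give t^m chi(XY) = t^m chi(YX), and t^m is regular. *)
Lemma char_poly_mulmxC (R : idomainType) m (X Y : 'M[R]_m) :
  char_poly (X *m Y) = char_poly (Y *m X).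
Proof.
pose t : {poly R} := 'X.
pose Xp := map_mx polyC X; pose Yp := map_mx polyC Y.
pose M := block_mx (t%:M) Xp Yp (1%:M : 'M_m).
pose L := block_mx (1%:M : 'M_m) (- Xp) 0 (t%:M).
have LM : L *m M = block_mx (char_poly_mx (X *m Y)) 0 (t%:M *m Yp) (t%:M).
  rewrite mulmx_block !mul1mx !mul0mx !add0r mulNmx mulmx1 addrN.
  by rewrite /char_poly_mx map_mxM -/Xp -/Yp mulmx1.
have ML : M *m L = block_mx (t%:M) 0 Yp (char_poly_mx (Y *m X)).
  rewrite mulmx_block !mulmx1 !mulmx0 !addr0 mulmxN mul1mx.
  by rewrite -scalar_mxC addNr mulmxN /char_poly_mx map_mxM -/Xp -/Yp addrC.
have := congr1 determinant LM; have := congr1 determinant ML.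
rewrite !det_mulmx det_lblock det_ublock det_lblock !det_scalar expr1n !mul1r.
move=> detML detLM; apply: (@mulIf _ (t ^+ m)).
  by rewrite expf_eq0 polyX_eq0 andbF.
by rewrite /char_poly -detLM mulrC detML mulrC.
Qed.

Section OrderedProducts.
Variables (R : pzRingType) (m : nat).
Implicit Types (M : 'M[R]_m) (s t : seq 'M[R]_m).

Lemma mxprod_cat s t : mxprod (s ++ t) = mxprod s *m mxprod t.
Proof. by elim: s => [|M s IHs] /=; rewrite ?mul1mx // IHs mulmxA. Qed.

Lemma comm_mxprod M s : all (comm_mxb M) s -> comm_mx M (mxprod s).
Proof.
elim: s => [|N s IHs] /=; first by rewrite /comm_mx mulmx1 mul1mx.
by case/andP=> /comm_mxP MN /IHs; apply: comm_mxM.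
Qed.

Variables (I : Type) (f : I -> 'M[R]_m).

(* A pair (i, j) with i \notin p listed before j \in p is out of order for
   moving the p-indexed factors to the front; such pairs must commute. *)
Definition comm_misordered (p : pred I) : rel I :=
  fun i j => p i || ~~ p j || comm_mxb (f i) (f j).

Lemma mxprod_partition (p : pred I) (l : seq I) :
  pairwise (comm_misordered p) l ->
  mxprod (map f l) =
  mxprod (map f (filter p l)) *m mxprod (map f (filter (predC p) l)).
Proof.
elim: l => [|i l IHl] /=; first by rewrite mulmx1.
case/andP=> ri /IHl ->.
case: ifP => pi /=; first by rewrite mulmxA.
have /comm_mxprod fiP : all (comm_mxb (f i)) (map f (filter p l)).
  rewrite all_map all_filter; apply: sub_all ri => j /=.
  by rewrite /comm_misordered pi; case: (p j).
by rewrite !mulmxA fiP.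
Qed.

End OrderedProducts.

Lemma char_poly_mxprod_swap (R : idomainType) m (I : Type) (f : I -> 'M[R]_m)
    (p : pred I) (u v : seq I) (x y : I) :
  p x -> ~~ p y ->
  pairwise (comm_misordered f p) (u ++ [:: x, y & v]) ->
  pairwise (comm_misordered f (predC p)) (u ++ [:: y, x & v]) ->
  char_poly (mxprod (map f (u ++ [:: x, y & v]))) =
  char_poly (mxprod (map f (u ++ [:: y, x & v]))).
Proof.
move=> px npy /mxprod_partition-> /mxprod_partition->.
rewrite char_poly_mulmxC (@eq_filter _ (predC (predC p)) p) => [|i]; last exact: negbK.
by rewrite !filter_cat /= px (negbTE npy).
Qed.

Section GossipMatrices.
Variables (R : pzRingType) (n b : nat).
Local Notation blk_mx := (mxblock (p_ := fun _ : 'I_n => b) (q_ := fun _ : 'I_n => b)).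
Implicit Types (C : {set 'I_n}) (A : 'I_n -> 'I_n -> 'M[R]_b).

Lemma mul_mxblock_disjoint0 (B B' : 'I_n -> 'I_n -> 'M[R]_b) (C C' : {set 'I_n}) :
  [disjoint C & C'] -> (forall i j, j \notin C -> B i j = 0) ->
  (forall j k, j \notin C' -> B' j k = 0) ->
  blk_mx B *m blk_mx B' = 0.
Proof.
move=> CC' B0 B'0; rewrite mul_mxblock -mxblock0; apply: eq_mxblock => i k.
apply: big1 => j _; case: (boolP (j \in C)) => [jC | /B0->]; last exact: mul0mx.
by rewrite B'0 ?mulmx0 // (disjointFr CC' jC).
Qed.

Definition gossip_dev (C : {set 'I_n}) (A : 'I_n -> 'I_n -> 'M[R]_b) i j : 'M[R]_b :=
  if (i \in C) && (j \in C) then A i j - (if i == j then 1%:M else 0) else 0.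

Lemma gossip_mxE C A : gossip_mx C A = 1%:M + blk_mx (gossip_dev C A).
Proof.
rewrite -[1%:M](mxdiagZ (p_ := fun _ : 'I_n => b)) /mxdiag -mxblockD.
apply: eq_mxblock => i j; rewrite /gossip_dev conform_mx_id.
by case: ifP => _; [rewrite addrC subrK | case: eqP; rewrite addr0].
Qed.

Lemma gossip_dev_col0 C A i j : j \notin C -> gossip_dev C A i j = 0.
Proof. by rewrite /gossip_dev => /negbTE->; rewrite andbF. Qed.

Lemma gossip_dev_row0 C A i j : i \notin C -> gossip_dev C A i j = 0.
Proof. by rewrite /gossip_dev => /negbTE->. Qed.

(* I + N and I + N' commute as soon as N N' = N' N = 0. *)
Lemma gossip_mx_comm C C' A A' : [disjoint C & C'] ->
  comm_mx (gossip_mx C A) (gossip_mx C' A').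
Proof.
move=> CC'; have C'C : [disjoint C' & C] by rewrite disjoint_sym.
rewrite /comm_mx !gossip_mxE !mulmxDl !mulmxDr !mul1mx !mulmx1.
rewrite (mul_mxblock_disjoint0 CC') ?(mul_mxblock_disjoint0 C'C);
  by [rewrite !addr0 addrAC | exact: gossip_dev_col0 | exact: gossip_dev_row0].
Qed.

End GossipMatrices.

(* S is the component of Qa once the edge Qa -- Qb is removed from L(H); a
   path from Qa to Qb avoiding that edge would close a cycle through Qa. *)
Lemma acyclic_edge_cut n (H : {set {set 'I_n}}) (Qa Qb : {set 'I_n}) :
  Qa \in H -> clique_adj Qa Qb -> ~ on_cycle H Qa ->
  exists S : {set {set 'I_n}}, [/\ Qa \in S, Qb \notin S &
    forall x y, x \in H -> y \in H -> x \in S -> y \notin S ->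
      clique_adj x y -> (x == Qa) && (y == Qb)].
Proof.
move=> QaH adj_ab no_cycle.
pose r : rel {set 'I_n} := fun C D => [&& D \in H, clique_adj C D &
   ~~ (((C == Qa) && (D == Qb)) || ((C == Qb) && (D == Qa)))].
have r_in_H x p : path r x p -> {subset p <= H}.
  elim: p x => //= y p IHp x /andP [/and3P [yH _ _] /IHp p_H] z.
  by rewrite inE => /predU1P [->|/p_H].
pose S := [set C | connect r Qa C].
have QbS : Qb \notin S.
  apply/negP; rewrite inE => /connectP [p r_p].
  case: (shortenP r_p) => p' r_p' uniq_p' _ /esym Qb_last.
  apply: no_cycle; exists (Qa :: p'); split.
  - case: p' r_p' uniq_p' Qb_last => [|y [|z p']] //=.
      by move=> _ _ eq_ab; rewrite /clique_adj eq_ab eqxx in adj_ab.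
    by move=> /andP [/and3P [_ _ +] _] _ y_b; rewrite y_b !eqxx.
  - exact: uniq_p'.
  - by move=> C /predU1P [->|/(r_in_H _ _ r_p')].
  - rewrite /= rcons_path Qb_last (sub_path _ r_p') => [|u v /and3P []] //.
    by rewrite /clique_adj eq_sym setIC in adj_ab.
  - exact: mem_head.
exists S; split=> //; first by rewrite inE connect0.
move=> x y xH yH xS; rewrite !inE => yS adj_xy; apply/contraNT: yS => not_ab.
have x_not_b : x != Qb by apply: contraNneq QbS => <-.
rewrite inE in xS; apply: connect_trans xS (connect1 _).
by rewrite /r yH adj_xy negb_or not_ab (negbTE x_not_b).
Qed.

Lemma pairwise_rev_enum_ord d (r : rel 'I_d) :
  (forall i j : 'I_d, (j < i)%N -> r i j) -> pairwise r (rev (enum 'I_d)).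
Proof.
move=> r_gt; apply: sub_pairwise r_gt _; rewrite -sorted_pairwise; last first.
  by move=> j i k /= ij ki; apply: ltn_trans ki ij.
by rewrite rev_sorted; have := iota_ltn_sorted 0 d; rewrite -val_enum_ord sorted_map.
Qed.

Section AdjacentTransposition.
Variables (d : nat) (s s' : 'I_d).
Hypothesis s'E : val s' = (val s).+1.
Local Notation t := (tperm s s').
Local Notation w := (rev (enum 'I_d)).

Lemma rev_enum_ord_tperm :
  exists u v, w = u ++ [:: s', s & v] /\ map t w = u ++ [:: s, s' & v].
Proof.
set E := enum 'I_d; have s1_lt_d : ((val s).+1 < d)%N by rewrite -s'E ltn_ord.
have E_split : E = take s E ++ [:: s, s' & drop (val s).+2 E].
  rewrite -{1}(cat_take_drop s E) (drop_nth s) ?size_enum_ord ?(ltn_trans _ s1_lt_d) //.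
  by rewrite (drop_nth s) ?size_enum_ord // nth_ord_enum -s'E nth_ord_enum.
set u := rev (drop (val s).+2 E); set v := rev (take s E).
have E_rev : rev E = u ++ [:: s', s & v].
  by rewrite {1}E_split rev_cat !rev_cons !cat_rcons.
have : uniq ([:: s'; s] ++ u ++ v).
  rewrite -(perm_uniq (introT permPl (perm_catCA u [:: s'; s] v))) -E_rev.
  by rewrite rev_uniq enum_uniq.
rewrite /= !inE negb_or => /and3P [/andP [_ s'_uv] s_uv _].
have fix_uv k : k \in u ++ v -> t k = k.
  by move=> k_uv; apply: tpermD; [move: s_uv | move: s'_uv]; apply: contraNneq => ->.
exists u, v; split=> //; rewrite E_rev map_cat /= tpermL tpermR !map_id_in // => k k_uv;
  by apply: fix_uv; rewrite mem_cat k_uv ?orbT.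
Qed.

Lemma s_not_before_s' (i j : 'I_d) : (j < i)%N -> (i != s) || (j != s').
Proof.
rewrite -negb_and => ji; apply: contraTN ji => /andP [/eqP -> /eqP ->].
by rewrite -leqNgt s'E leqnSn.
Qed.

Lemma mxprod_rev_enum_tperm (R : pzRingType) m (f : 'I_d -> 'M[R]_m) :
  comm_mx (f s) (f s') -> mxprod (map (f \o t) w) = mxprod (map f w).
Proof.
have [u [v [wE twE]]] := rev_enum_ord_tperm.
rewrite map_comp twE wE !map_cat !mxprod_cat /= => fss'.
by congr (_ *m _); rewrite !mulmxA fss'.
Qed.

Lemma char_poly_mxprod_rev_enum_tperm (R : idomainType) m (f : 'I_d -> 'M[R]_m)
    (p : pred 'I_d) :
  p s' -> ~~ p s ->
  (forall i j, p i -> ~~ p j -> (i != s') || (j != s) -> comm_mxb (f i) (f j)) ->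
  char_poly (mxprod (map (f \o t) w)) = char_poly (mxprod (map f w)).
Proof.
move=> ps' nps comm_p.
have [u [v [wE twE]]] := rev_enum_ord_tperm.
symmetry; rewrite map_comp twE wE; apply: (char_poly_mxprod_swap (p := p)) => //.
- rewrite -wE; apply: pairwise_rev_enum_ord => i j ji; rewrite /comm_misordered.
  case: (boolP (p i)) => //= npi; case: (boolP (p j)) => //= pj.
  by apply/comm_mxP/comm_mx_sym/comm_mxP; rewrite comm_p // orbC s_not_before_s'.
- rewrite -twE pairwise_map; apply: pairwise_rev_enum_ord => i j ji.
  rewrite /comm_misordered /=; case: (boolP (p (t i))) => //= pti.
  case: (boolP (p (t j))) => //= nptj; apply: comm_p => //.
  by rewrite !(canF_eq (tpermK s s')) tpermR tpermL s_not_before_s'.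
Qed.

End AdjacentTransposition.

Theorem theorem1 (R : realFieldType) (n b d : nat) (hb : (0 < b)%N)
  (e : rel 'I_n) (hG : simple_graph e)
  (H : {set {set 'I_n}}) (hH : clique_coverage e H) (hd : #|H| = d)
  (Q : 'I_d -> {set 'I_n}) (hQinj : injective Q) (hQH : forall k, Q k \in H)
  (A : {set 'I_n} -> 'I_n -> 'I_n -> 'M[R]_b)
  (s s' : 'I_d) (hss' : val s' = (val s).+1) :
  (~~ clique_adj (Q s) (Q s') \/
   (clique_adj (Q s) (Q s') /\ ~ on_cycle H (Q s) /\ ~ on_cycle H (Q s'))) ->
  char_poly (ordered_prod Q A) = char_poly (ordered_prod (Q \o tperm s s') A).
Proof.
pose G k := gossip_mx (Q k) (A (Q k)).
have -> : ordered_prod Q A = mxprod (map G (rev (enum 'I_d))) by [].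
have -> : ordered_prod (Q \o tperm s s') A =
          mxprod (map (G \o tperm s s') (rev (enum 'I_d))) by [].
have disj_Q i j : ~~ clique_adj (Q i) (Q j) -> i != j -> [disjoint Q i & Q j].
  by rewrite -setI_eq0 /clique_adj (inj_eq hQinj) => /nandP [/negPn -> |/negPn].
case=> [not_adj | [adj [no_cycle _]]].
  rewrite mxprod_rev_enum_tperm //; apply/gossip_mx_comm/disj_Q => //.
  by rewrite -val_eqE hss' ltn_eqF.
have [S [QsS Qs'S cut]] := acyclic_edge_cut (hQH s) adj no_cycle.
symmetry; apply: (char_poly_mxprod_rev_enum_tperm hss' (p := fun k => Q k \notin S));
  rewrite ?negbK // => i j iS; rewrite negbK => jS ij.
apply/comm_mxP/comm_mx_sym/gossip_mx_comm/disj_Q; last by apply: contraNneq iS => <-.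
apply: contraTN ij => /(cut _ _ (hQH j) (hQH i) jS iS).
by rewrite !(inj_eq hQinj) => /andP [/eqP -> /eqP ->]; rewrite !eqxx.
Qed.
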